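(* Let $\langle M,\mathsf{S}\rangle$ be a sum structure. Then for all $x\in M$ and $X\subseteq M$: if $x\,\mathsf{S}_{\sqsubseteq_{\mathsf{S}}}\,X$ then $x\,\mathsf{S}\,X$.
   Context: For a set $M$ and a relation $\mathsf{S}\subseteq M\times\mathcal{P}(M)$ define: $x\sqsubseteq_{\mathsf{S}} y$ iff there is $X\subseteq M$ with $y\,\mathsf{S}\,X$ and $x\in X$; $\mathrm{I}(x)=\{y\in M\mid y\sqsubseteq_{\mathsf{S}} x\}$ and for $A\subseteq M$, $\mathrm{I}(A)=\bigcup_{a\in A}\mathrm{I}(a)$; $x$ s-overlaps $y$ iff there are $X,Y\subseteq M$ with $x\,\mathsf{S}\,X$, $y\,\mathsf{S}\,Y$, $X\cap Y\neq\emptyset$; a set $A\subseteq M$ is pre-dense in $B\subseteq M$ iff for every $b\in B$ there is $a\in A$ such that $a$ s-overlaps $b$. Overlap w.r.t. $\sqsubseteq_{\mathsf{S}}$: $x\circ y$ iff there is $z\in M$ with $z\sqsubseteq_{\mathsf{S}} x$ and $z\sqsubseteq_{\mathsf{S}} y$. The induced sum: $x\,\mathsf{S}_{\sqsubseteq_{\mathsf{S}}}\,X$ iff every $y\in X$ satisfies $y\sqsubseteq_{\mathsf{S}} x$, and for every $z\in M$ with $z\sqsubseteq_{\mathsf{S}} x$ there is $y\in X$ with $y\circ z$. A sum structure is a pair $\langle M,\mathsf{S}\rangle$ satisfying: (S1) for every non-empty $X\subseteq M$ there is $x\in M$ with $x\,\mathsf{S}\,X$; (S2) $x\,\mathsf{S}\,X\wedge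 y\,\mathsf{S}\,X\to x=y$; (S3) $x\,\mathsf{S}\,X\wedge y\,\mathsf{S}\,Y\wedge x\in Y\to y\,\mathsf{S}\,(X\cup Y)$; (S4) if $x\,\mathsf{S}\,X$, $x\,\mathsf{S}\,Y$ and $y\in Y$, then there are $z\in X$ and $Z,U\subseteq M$ with $z\,\mathsf{S}\,Z$, $y\,\mathsf{S}\,U$ and $Z\cap U\neq\emptyset$; (S5) for all $x\in M$ and $X\subseteq M$: if $X$ is pre-dense in $\mathrm{I}(x)$ then $x\,\mathsf{S}\,(\mathrm{I}(x)\cap\mathrm{I}(X))$. *)

(* Subsets of M are predicates M -> Prop; S ⊆ M × P(M) is S : M -> (M -> Prop) -> Prop. *)


Section SumDefs.
Context {M : Type} (S : M -> (M -> Prop) -> Prop).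

Definition partS (x y : M) : Prop := exists X : M -> Prop, S y X /\ X x.

Definition Iof (x : M) : M -> Prop := fun y => partS y x.

Definition IofSet (A : M -> Prop) : M -> Prop := fun y => exists a, A a /\ Iof a y.

Definition soverlaps (x y : M) : Prop :=
  exists X Y : M -> Prop, S x X /\ S y Y /\ exists z, X z /\ Y z.

Definition predense (A B : M -> Prop) : Prop :=
  forall b, B b -> exists a, A a /\ soverlaps a b.

Definition ovl (x y : M) : Prop := exists z, partS z x /\ partS z y.

Definition induced_sum (x : M) (X : M -> Prop) : Prop :=
  (forall y, X y -> partS y x) /\
  (forall z, partS z x -> exists y, X y /\ ovl y z).

Definition sum_structure : Prop :=
  (forall X : M -> Prop, (exists y, X y) -> exists x, S x X) /\
  (forall x y X, S x X -> S y X -> x = y) /\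
  (forall x y X Y, S x X -> S y Y -> Y x ->
              S y (fun z => X z \/ Y z)) /\
  (forall x X Y y, S x X -> S x Y -> Y y ->
              exists z, X z /\ exists Z U : M -> Prop,
                S z Z /\ S y U /\ exists w, Z w /\ U w) /\
  (forall x X, predense X (Iof x) ->
              S x (fun z => Iof x z /\ IofSet X z)).

End SumDefs.

From Stdlib Require Import Classical FunctionalExtensionality PropExtensionality.

(* If X is empty, x has no parts at all, so (S5) applied to X yields
   x S (I(x) ∩ I(X)) = x S ∅ = x S X.
   Otherwise (S1) gives some s with s S X, and we show x = s; then x S X.
   Two elements a, b are equal as soon as every part of a s-overlaps b and
   every part of b s-overlaps a: by (S5) both a and b are S-sums of the common
   set I(a) ∩ I(b), and (S2) identifies them.  Every part of x s-overlaps s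
   because it overlaps some member of X (second clause of the induced sum),
   which is a part of s; every part of s s-overlaps x by (S4), because members
   of X are parts of x (first clause).  Transitivity of ⊑_S, derived from (S3),
   is used in both directions. *)

Section SumStructureFacts.
Context {M : Type} {S : M -> (M -> Prop) -> Prop}.

Lemma sum_ext {x : M} {A B : M -> Prop} :
  S x A -> (forall z, A z <-> B z) -> S x B.
Proof.
  intros HA AB.
  assert (A = B) as <- by
    (apply functional_extensionality; intro z;
     apply propositional_extensionality; apply AB).
  exact HA.
Qed.

Lemma partS_trans
  (S3 : forall x y X Y, S x X -> S y Y -> Y x -> S y (fun z => X z \/ Y z))
  (a b c : M) : partS S a b -> partS S b c -> partS S a c.
Proof.
  intros [B [HB Ha]] [C [HC Hb]].
  exists (fun z => B z \/ C z); split.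
  - exact (S3 b c B C HB HC Hb).
  - now left.
Qed.

Lemma soverlaps_of_common_part (z a b : M) :
  partS S z a -> partS S z b -> soverlaps S a b.
Proof.
  intros [A [HA Hza]] [B [HB Hzb]].
  exists A, B; repeat split; auto.
  now exists z.
Qed.

(* By (S5) and (S2): if every part of a s-overlaps b and every part of b
   s-overlaps a, then a and b are both sums of I(a) ∩ I(b), hence equal. *)
Lemma eq_of_mutual_soverlap
  (S2 : forall x y X, S x X -> S y X -> x = y)
  (S5 : forall x X, predense S X (Iof S x) ->
          S x (fun z => Iof S x z /\ IofSet S X z))
  (a b : M) :
  predense S (fun c => c = b) (Iof S a) ->
  predense S (fun c => c = a) (Iof S b) -> a = b.
Proof.
  intros Hab Hba.
  apply (S2 a b (fun z => Iof S a z /\ Iof S b z)).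
  - apply (sum_ext (S5 a _ Hab)).
    intro z; split.
    + intros [Ha [c [-> Hb]]]; now split.
    + intros [Ha Hb]; split; [exact Ha | now exists b].
  - apply (sum_ext (S5 b _ Hba)).
    intro z; split.
    + intros [Hb [c [-> Ha]]]; now split.
    + intros [Ha Hb]; split; [exact Hb | now exists a].
Qed.

Section InducedSum.
Hypothesis S3 : forall x y X Y, S x X -> S y Y -> Y x -> S y (fun z => X z \/ Y z).
Context {x : M} {X : M -> Prop}.
Hypothesis x_isum : induced_sum S x X.

(* An induced sum of the empty set has no parts, so by (S5) it is an S-sum
   of the empty set as well. *)
Lemma induced_sum_of_empty
  (S5 : forall x X, predense S X (Iof S x) ->
          S x (fun z => Iof S x z /\ IofSet S X z)) :
  ~ (exists y, X y) -> S x X.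
Proof.
  intros X_empty.
  destruct x_isum as [_ x_covered].
  assert (no_part : forall z, ~ partS S z x).
  { intros z Hz; destruct (x_covered z Hz) as [y [Hy _]]; eauto. }
  apply (sum_ext (S5 x X (fun b Hb => False_ind _ (no_part b Hb)))).
  intro z; split.
  - intros [Hz _]; destruct (no_part z Hz).
  - intros Hz; exfalso; eauto.
Qed.

(* Every part of x s-overlaps any S-sum s of X: it overlaps a member of X,
   which is a part of s. *)
Lemma parts_of_induced_sum_meet_sum {s : M} :
  S s X -> predense S (fun c => c = s) (Iof S x).
Proof.
  intros Hs b Hb; exists s; split; [reflexivity |].
  destruct x_isum as [_ x_covered].
  destruct (x_covered b Hb) as [y [Hy [z [Hzy Hzb]]]].
  apply (soverlaps_of_common_part z); [| exact Hzb].
  apply (partS_trans S3 z y s Hzy); now exists X.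
Qed.

(* Every part of an S-sum s of X s-overlaps x: by (S4) it s-overlaps a member
   of X, and members of X are parts of x. *)
Lemma parts_of_sum_meet_induced_sum
  (S4 : forall x X Y y, S x X -> S x Y -> Y y ->
          exists z, X z /\ exists Z U : M -> Prop,
            S z Z /\ S y U /\ exists w, Z w /\ U w)
  {s : M} :
  S s X -> predense S (fun c => c = x) (Iof S s).
Proof.
  intros Hs b [Y [HY Hb]]; exists x; split; [reflexivity |].
  destruct x_isum as [X_parts _].
  destruct (S4 s X Y b Hs HY Hb) as [z [Hz [Z [U [HZ [HU [w [Hw Hw']]]]]]]].
  apply (soverlaps_of_common_part w).
  - apply (partS_trans S3 w z x); [now exists Z | exact (X_parts z Hz)].
  - now exists U.
Qed.

End InducedSum.
End SumStructureFacts.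

Theorem lemma3p11 (M : Type) (S : M -> (M -> Prop) -> Prop) :
  sum_structure S ->
  forall (x : M) (X : M -> Prop), induced_sum S x X -> S x X.
Proof.
  intros [S1 [S2 [S3 [S4 S5]]]] x X x_isum.
  destruct (classic (exists y, X y)) as [X_inhabited | X_empty].
  - destruct (S1 X X_inhabited) as [s Hs].
    assert (x_eq_s : x = s).
    { apply (eq_of_mutual_soverlap S2 S5).
      - exact (parts_of_induced_sum_meet_sum S3 x_isum Hs).
      - exact (parts_of_sum_meet_induced_sum S3 x_isum S4 Hs). }
    now subst s.
  - exact (induced_sum_of_empty x_isum S5 X_empty).
Qed.
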